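(* For regular spaces $X$, the following properties are pairwise equivalent: DCCC; selectively $3$-star-ccc; selectively $\omega$-star-ccc; weakly star-Lindelöf; weakly $\omega$-star-Lindelöf; weakly strongly $2$-star-Lindelöf; weakly strongly $\omega$-star-Lindelöf; $2$-star-Lindelöf; $\omega$-star-Lindelöf; strongly $3$-star-Lindelöf; strongly $\omega$-star-Lindelöf (and hence so is every property that is implied by one of these and implies another of these).
   Context: For $B\subseteq X$ and a family $\mathcal{U}$ of subsets of $X$: $\operatorname{st}^1(B,\mathcal{U})=\bigcup\{U\in\mathcal{U}:U\cap B\neq\emptyset\}$, $\operatorname{st}^{n+1}(B,\mathcal{U})=\bigcup\{U\in\mathcal{U}:U\cap\operatorname{st}^n(B,\mathcal{U})\neq\emptyset\}$. DCCC: every discrete family of open sets is countable. For $k\in\mathbb{N}^+$: $X$ is $k$-star-Lindelöf (resp. strongly $k$-star-Lindelöf) if every open cover $\mathcal{U}$ admits a countable $\mathcal{V}\subseteq\mathcal{U}$ (resp. countable $B\subseteq X$) with $\operatorname{st}^k(\bigcup\mathcal{V},\mathcal{U})=X$ (resp. $\operatorname{st}^k(B,\mathcal{U})=X$); weakly $k$-star-Lindelöf (resp. weakly strongly $k$-star-Lindelöf) is the same with the conclusion replaced by density: $\overline{\operatorname{st}^k(\bigcup\mathcal{V},\mathcal{U})}=X$ (resp. $\overline{\operatorname{st}^k(B,\mathcal{U})}=X$). The $\omega$-versions ($\omega$-star-Lindelöf, strongly $\omega$-star-Lindelöf, weakly $\omega$-star-Lindelöf, weakly strongly $\omega$-star-Lindelöf)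 are defined the same way except that for each open cover one only requires some $k\in\mathbb{N}^+$ (depending on the cover) together with the countable $\mathcal{V}$ or $B$. ''Weakly star-Lindelöf'' means weakly $1$-star-Lindelöf. $X$ is selectively $k$-star-ccc if for every open cover $\mathcal{U}$ and every sequence $(\mathcal{A}_n:n\in\omega)$ of maximal pairwise disjoint families of open sets there is $(A_n\in\mathcal{A}_n:n\in\omega)$ with $\operatorname{st}^k(\bigcup_n A_n,\mathcal{U})=X$; selectively $\omega$-star-ccc is the same but with some $k\in\mathbb{N}^+$ (depending on $\mathcal{U}$ and the sequence) allowed. *)

From HB Require Import structures.
From mathcomp Require Import all_boot all_order.
From mathcomp Require Import all_classical all_reals topology.
Set Implicit Arguments. Unset Strict Implicit. Unset Printing Implicit Defensive.
Local Open Scope classical_set_scope.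

Section StarDefs.
Variable X : topologicalType.

Definition open_cover (U : set (set X)) :=
  (forall W, U W -> open W) /\ \bigcup_(W in U) W = setT.

Definition star1 (U : set (set X)) (B : set X) : set X :=
  \bigcup_(W in [set W | U W /\ W `&` B !=set0]) W.

Definition stk (k : nat) (B : set X) (U : set (set X)) : set X :=
  iter k (star1 U) B.

Definition discrete_family (F : set (set X)) :=
  forall x : X, exists N : set X, nbhs x N /\
    forall D1 D2, F D1 -> F D2 -> D1 `&` N !=set0 -> D2 `&` N !=set0 -> D1 = D2.

Definition DCCC :=
  forall F : set (set X), (forall D, F D -> open D) -> discrete_family F ->
    countable F.

Definition k_star_Lindelof (k : nat) :=
  forall U, open_cover U -> exists V, V `<=` U /\ countable V /\
    stk k (\bigcup_(W in V) W) U = setT.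

Definition strongly_k_star_Lindelof (k : nat) :=
  forall U, open_cover U -> exists B : set X, countable B /\ stk k B U = setT.

Definition weakly_k_star_Lindelof (k : nat) :=
  forall U, open_cover U -> exists V, V `<=` U /\ countable V /\
    closure (stk k (\bigcup_(W in V) W) U) = setT.

Definition weakly_strongly_k_star_Lindelof (k : nat) :=
  forall U, open_cover U -> exists B : set X, countable B /\
    closure (stk k B U) = setT.

Definition omega_star_Lindelof :=
  forall U, open_cover U -> exists k, (0 < k)%N /\ exists V, V `<=` U /\
    countable V /\ stk k (\bigcup_(W in V) W) U = setT.

Definition strongly_omega_star_Lindelof :=
  forall U, open_cover U -> exists k, (0 < k)%N /\
    exists B : set X, countable B /\ stk k B U = setT.

Definition weakly_omega_star_Lindelof :=
  forall U, open_cover U -> exists k, (0 < k)%N /\ exists V, V `<=` U /\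
    countable V /\ closure (stk k (\bigcup_(W in V) W) U) = setT.

Definition weakly_strongly_omega_star_Lindelof :=
  forall U, open_cover U -> exists k, (0 < k)%N /\
    exists B : set X, countable B /\ closure (stk k B U) = setT.

Definition disjoint_open_family (A : set (set X)) :=
  (forall W, A W -> open W) /\
  (forall W1 W2, A W1 -> A W2 -> W1 <> W2 -> W1 `&` W2 = set0).

Definition maximal_disjoint_open_family (A : set (set X)) :=
  disjoint_open_family A /\
  forall A', disjoint_open_family A' -> A `<=` A' -> A' = A.

Definition selectively_k_star_ccc (k : nat) :=
  forall U (A : nat -> set (set X)), open_cover U ->
    (forall n, maximal_disjoint_open_family (A n)) ->
    exists a : nat -> set X, (forall n, A n (a n)) /\
      stk k (\bigcup_n a n) U = setT.

Definition selectively_omega_star_ccc :=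
  forall U (A : nat -> set (set X)), open_cover U ->
    (forall n, maximal_disjoint_open_family (A n)) ->
    exists k, (0 < k)%N /\ exists a : nat -> set X, (forall n, A n (a n)) /\
      stk k (\bigcup_n a n) U = setT.

End StarDefs.

From HB Require Import structures.
From mathcomp Require Import all_boot all_order.
From mathcomp Require Import all_classical all_reals topology.
Set Implicit Arguments. Unset Strict Implicit. Unset Printing Implicit Defensive.
Local Open Scope classical_set_scope.

(* Every property in the list implies weak strong ω-star-Lindelöfness: stars are
   monotone, and a countable subfamily V of a cover U can be traded for a countable
   set of points B with ⋃V ⊆ st(B, U), and conversely with B ⊆ ⋃V.  DCCC gives back
   the strongest properties: a maximal family O of nonempty open sets, each inside a
   member of U and no member of U meeting two of them, is discrete, hence countable,
   and its maximality makes st(⋃O, U) dense and st²(⋃O, U) = X.  Selections from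
   maximal disjoint families are handled with a maximal disjoint open refinement of
   U.  Finally, in a regular space take an uncountable discrete family of nonempty
   open sets D, open sets D = G_D(0) ⊇ cl G_D(1) ⊇ G_D(1) ⊇ cl G_D(2) ⊇ ..., and
   depths d(D).  The rings G_D(i) \ cl G_D(i+2) (i < d(D)), the cores G_D(d(D)) and
   the complement of cl ⋃_D G_D(1) cover X, and st^k(B) misses G_D(k) whenever B
   misses D and k ≤ d(D); choosing d with every level set {d ≥ k} uncountable
   defeats every countable B. *)

Lemma countableU T (A B : set T) : countable A -> countable B -> countable (A `|` B).
Proof.
move=> cA cB; rewrite -bigcup2E; apply: bigcup_countable => [|[|[|i]] _] //.
Qed.

Lemma countable_image T T' (f : T -> T') (A : set T) :
  countable A -> countable (f @` A).
Proof. exact: card_le_trans (card_image_le f A). Qed.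

Lemma Zorn_pairwise T (p : T -> Prop) (r : T -> T -> Prop) :
  (forall x, r x x) -> (forall x y, r x y -> r y x) ->
  exists A : set T, [/\ forall x, A x -> p x,
    forall x y, A x -> A y -> r x y &
    forall z, p z -> (forall x, A x -> r x z) -> A z].
Proof.
move=> rxx rC.
pose P A := (forall x, A x -> p x) /\ forall x y, A x -> A y -> r x y.
have chainP F : F `<=` P -> total_on F subset -> P (\bigcup_(A in F) A).
  move=> FP tot; split; first by move=> x [B FB Bx]; exact: (FP B FB).1.
  move=> x y [B FB Bx] [C FC Cy]; have [BC|CB] := tot B C FB FC.
  - exact: (FP C FC).2 _ _ (BC _ Bx) Cy.
  - exact: (FP B FB).2 _ _ Bx (CB _ Cy).
have [A [[pA rA] Amax]] := Zorn_bigcup chainP.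
exists A; split => // z pz rz; apply: contrapT => Az.
apply: (Amax (A `|` [set z])).
  by split; [exact: subsetUl | move=> /(_ z (or_intror erefl))].
split; first by move=> x [/pA|->].
by move=> x y [Ax|->] [Ay|->]; [exact: rA | exact: rz | exact/rC/rz | exact: rxx].
Qed.

Lemma countable_members_meeting T (F : set (set T)) (B : set T) :
  (forall D1 D2 x, F D1 -> F D2 -> D1 x -> D2 x -> D1 = D2) -> countable B ->
  countable [set D | F D /\ D `&` B !=set0].
Proof.
move=> Fdisj cB; have /choice[t tP] : forall b, exists E, forall D, F D -> D b -> E = D.
  move=> b; have [[D [FD Db]]|nb] := pselect (exists D, F D /\ D b).
    by exists D => D' FD' D'b; exact: Fdisj FD FD' Db D'b.
  by exists set0 => D FD Db; case: nb; exists D.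
apply: sub_countable (countable_image t cB); apply: subset_card_le.
by move=> D [FD [b [Db Bb]]]; exists b => //; exact: tP.
Qed.

Lemma uncountable_disjoint_sequences (T : pointedType) (S : set T) : ~ countable S ->
  exists A : set (set T), [/\ ~ countable A,
    forall C, A C -> C `<=` S /\ exists f : nat -> T, injective f /\ C = range f &
    forall C1 C2, A C1 -> A C2 -> C1 `&` C2 !=set0 -> C1 = C2].
Proof.
move=> nS; pose meet_eq (C1 C2 : set T) := C1 `&` C2 !=set0 -> C1 = C2.
have meetxx C : meet_eq C C by [].
have meetC C1 C2 : meet_eq C1 C2 -> meet_eq C2 C1.
  by move=> h; rewrite /meet_eq setIC => /h.
have [A [pA rA Amax]] := Zorn_pairwise
  (fun C => C `<=` S /\ exists f : nat -> T, injective f /\ C = range f) meetxx meetC.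
exists A; split => // cA.
have cUA : countable (\bigcup_(C in A) C).
  apply: bigcup_countable => // C /pA [_ [f [_ ->]]].
  exact: countable_image (countableP _).
have : infinite_set (S `\` \bigcup_(C in A) C).
  move=> /finite_set_countable cR; apply: nS.
  apply: sub_countable (countableU cUA cR); apply: subset_card_le => x Sx.
  by have [|] := pselect ((\bigcup_(C in A) C) x); [left | right].
move=> /infiniteP /pcard_leP[f].
have fi : injective f by move=> m n; apply: (@inj _ _ _ f); rewrite inE.
have fR n : (S `\` \bigcup_(C in A) C) (f n) by apply: funS.
have [_ nAf0] := fR 0%N; apply: nAf0; exists (range f); last by exists 0%N.
apply: Amax => [|C CA [y [Cy [n _ fny]]]].
  by split; [move=> _ [n _ <-]; exact: (fR n).1 | exists f].
by have [_] := fR n; case; exists C; rewrite // fny.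
Qed.

(* d x is the index of x in the sequence of A through x, so that C |-> F C k
   injects the uncountable family A into the level set {d >= k}. *)
Lemma uncountable_unbounded_labelling (T : pointedType) (S : set T) : ~ countable S ->
  exists d : T -> nat, forall k, ~ countable [set x | S x /\ (k <= d x)%N].
Proof.
move=> nS; have [A [nA pA Adisj]] := uncountable_disjoint_sequences nS.
have /choice[F FP] : forall C, exists f : nat -> T, A C -> injective f /\ C = range f.
  move=> C; have [/pA [_ [f fP]]|nAC] := pselect (A C); first by exists f => _.
  by exists (fun=> point) => /nAC.
have memF C n : A C -> C (F C n).
  by move=> CA; have [_ eC] := FP C CA; rewrite {1}eC; exists n.
have /choice[d dP] : forall x, exists m, forall C n, A C -> x = F C n -> m = n.
  move=> x; have [[C [n [CA ->]]]|nx] := pselect (exists C n, A C /\ x = F C n).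
    exists n => C' n' CA' e; have CC' : C = C'.
      apply: Adisj => //; exists (F C n).
      by split; [exact: memF | rewrite e; exact: memF].
    by subst C'; apply: (FP C CA).1.
  by exists 0%N => C n CA xe; case: nx; exists C, n.
exists d => k /countable_injP[g gi]; apply: nA; apply/countable_injP.
exists (fun C => g (F C k)) => C1 C2; rewrite !inE => AC1 AC2 e.
have level C : A C -> [set x | S x /\ (k <= d x)%N] (F C k).
  by move=> CA; split; [exact: (pA C CA).1 (memF C k CA) | rewrite (dP _ C k CA erefl)].
have e2 : F C1 k = F C2 k by apply: gi; rewrite ?inE //; exact: level.
by apply: Adisj => //; exists (F C1 k); split; [exact: memF | rewrite e2; exact: memF].
Qed.

Lemma discrete_family_eq (X : topologicalType) (F : set (set X)) D1 D2 x :
  discrete_family F -> F D1 -> F D2 -> D1 x -> D2 x -> D1 = D2.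
Proof.
move=> dF F1 F2 D1x D2x; have [N [nN NP]] := dF x.
by apply: NP => //; exists x; split => //; exact: nbhs_singleton.
Qed.

Section Stars.
Variables (X : topologicalType) (U : set (set X)).

Lemma star1S (A B : set X) : A `<=` B -> star1 U A `<=` star1 U B.
Proof.
by move=> AB x [W [UW [y [Wy /AB By]]] Wx]; exists W => //; split => //; exists y.
Qed.

Lemma stkS k (A B : set X) : A `<=` B -> stk k A U `<=` stk k B U.
Proof. by elim: k => [//|k IH] AB; apply: star1S; exact: IH. Qed.

Lemma stkSr k (A : set X) : stk k.+1 A U = stk k (star1 U A) U.
Proof. exact: iterSr. Qed.

Lemma sub_star1 W (A : set X) : U W -> W `&` A !=set0 -> W `<=` star1 U A.
Proof. by move=> UW WA x Wx; exists W. Qed.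

Lemma open_cover_selector : open_cover U ->
  exists w : X -> set X, forall x, U (w x) /\ w x x.
Proof.
move=> [_ cov]; suff /choice[w wP] : forall x, exists W, U W /\ W x by exists w.
move=> x; have [W UW Wx] : (\bigcup_(W in U) W) x by rewrite cov.
by exists W.
Qed.

Lemma countable_points_star1 (V : set (set X)) : V `<=` U -> countable V ->
  exists B : set X, countable B /\ \bigcup_(W in V) W `<=` star1 U B.
Proof.
move=> VU cV; have [[x0 _]|X0] := pselect (exists x : X, True); last first.
  by exists set0; split => [|x]; [exact: countable0 | case: X0; exists x].
have /choice[p pP] : forall W : set X, exists x, W !=set0 -> W x.
  move=> W; have [[x Wx]|W0] := pselect (W !=set0).
  - by exists x.
  - by exists x0 => /W0.
exists (p @` V); split; first exact: countable_image.
move=> x [W VW Wx]; have Wp : W (p W) by apply: pP; exists x.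
by apply: sub_star1 Wx; [exact: VU | exists (p W); split => //; exists W].
Qed.

Lemma countable_refinement_subfamily (O : set (set X)) : countable O ->
  (forall D, O D -> D !=set0 -> exists2 W, U W & D `<=` W) ->
  exists V, [/\ V `<=` U, countable V & \bigcup_(D in O) D `<=` \bigcup_(W in V) W].
Proof.
move=> cO Oref; have /choice[r rP] : forall D : set X,
    exists W, O D -> D !=set0 -> U W /\ D `<=` W.
  move=> D; have [[OD D0]|nD] := pselect (O D /\ D !=set0).
    by have [W UW DW] := Oref D OD D0; exists W.
  by exists set0 => OD D0; case: nD.
exists (r @` [set D | O D /\ D !=set0]); split.
- by move=> _ [D [OD D0] <-]; exact: (rP D OD D0).1.
- by apply: countable_image; apply: sub_countable cO; apply: subset_card_le => D [].
- move=> x [D OD Dx]; have D0 : D !=set0 by exists x.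
  by exists (r D); [exists D | exact: (rP D OD D0).2].
Qed.

End Stars.

Section Weakenings.
Variable X : topologicalType.

Lemma k_star_Lindelof_omega k :
  k_star_Lindelof X k.+1 -> omega_star_Lindelof X.
Proof. by move=> h U /h ?; exists k.+1. Qed.

Lemma strongly_k_star_Lindelof_omega k :
  strongly_k_star_Lindelof X k.+1 -> strongly_omega_star_Lindelof X.
Proof. by move=> h U /h ?; exists k.+1. Qed.

Lemma weakly_k_star_Lindelof_omega k :
  weakly_k_star_Lindelof X k.+1 -> weakly_omega_star_Lindelof X.
Proof. by move=> h U /h ?; exists k.+1. Qed.

Lemma weakly_strongly_k_star_Lindelof_omega k :
  weakly_strongly_k_star_Lindelof X k.+1 -> weakly_strongly_omega_star_Lindelof X.
Proof. by move=> h U /h ?; exists k.+1. Qed.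

Lemma selectively_k_star_ccc_omega k :
  selectively_k_star_ccc X k.+1 -> selectively_omega_star_ccc X.
Proof. by move=> h U A cU /(h U A cU) ?; exists k.+1. Qed.

Lemma omega_star_Lindelof_weakly :
  omega_star_Lindelof X -> weakly_omega_star_Lindelof X.
Proof.
move=> h U /h [k [k0 [V [VU [cV stV]]]]].
by exists k; split => //; exists V; rewrite stV closureT.
Qed.

Lemma k_star_Lindelof_strongly_succ k :
  k_star_Lindelof X k -> strongly_k_star_Lindelof X k.+1.
Proof.
move=> h U /h [V [VU [cV stV]]]; have [B [cB VB]] := countable_points_star1 VU cV.
exists B; split => //; apply/seteqP; split => //.
by rewrite -stV stkSr; exact: stkS.
Qed.

Lemma weakly_k_star_Lindelof_weakly_strongly_succ k :
  weakly_k_star_Lindelof X k -> weakly_strongly_k_star_Lindelof X k.+1.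
Proof.
move=> h U /h [V [VU [cV stV]]]; have [B [cB VB]] := countable_points_star1 VU cV.
exists B; split => //; apply/seteqP; split => //.
by rewrite -stV stkSr; apply: closureS; exact: stkS.
Qed.

Lemma weakly_omega_star_Lindelof_weakly_strongly :
  weakly_omega_star_Lindelof X -> weakly_strongly_omega_star_Lindelof X.
Proof.
move=> h U /h [k [_ [V [VU [cV stV]]]]].
have [B [cB VB]] := countable_points_star1 VU cV.
exists k.+1; split => //; exists B; split => //; apply/seteqP; split => //.
by rewrite -stV stkSr; apply: closureS; exact: stkS.
Qed.

Lemma strongly_omega_star_Lindelof_omega_star_Lindelof :
  strongly_omega_star_Lindelof X -> omega_star_Lindelof X.
Proof.
move=> h U cU; have [k [k0 [B [cB stB]]]] := h U cU.
have [w wP] := open_cover_selector cU.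
have Bref D : [set [set b] | b in B] D -> D !=set0 -> exists2 W, U W & D `<=` W.
  by move=> [b _ <-] _; exists (w b); [exact: (wP b).1 | move=> _ ->; exact: (wP b).2].
have [V [VU cV BV]] := countable_refinement_subfamily (countable_image _ cB) Bref.
exists k; split => //; exists V; split => //; split => //; apply/seteqP; split => //.
by rewrite -stB; apply: stkS => b Bb; apply: BV; exists [set b]; [exists b | ].
Qed.

End Weakenings.

Section DisjointFamilies.
Variable X : topologicalType.

Lemma maximal_disjoint_open_family_add (A : set (set X)) W :
  maximal_disjoint_open_family A -> open W ->
  (forall a, A a -> a `&` W = set0) -> A W.
Proof.
move=> [[oA dA] Amax] oW aW.
suff <- : A `|` [set W] = A by right.
apply: Amax; last exact: subsetUl.
split; first by move=> V [/oA|->].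
move=> W1 W2 [A1|->] [A2|->] ne; first exact: dA.
- exact: aW.
- by rewrite setIC; exact: aW.
- by case: ne.
Qed.

Lemma maximal_disjoint_open_family_meets (A : set (set X)) W :
  maximal_disjoint_open_family A -> open W ->
  exists2 a, A a & (W !=set0 -> a `&` W !=set0).
Proof.
move=> mA oW; have [[a [Aa aW]]|noa] := pselect (exists a, A a /\ a `&` W !=set0).
  by exists a.
exists W; last by rewrite setIid.
apply: maximal_disjoint_open_family_add => // a Aa.
by apply/nonemptyPn => aW; apply: noa; exists a.
Qed.

Lemma exists_maximal_disjoint_open_refinement (U : set (set X)) : open_cover U ->
  exists A, maximal_disjoint_open_family A /\
    forall D, A D -> D !=set0 -> exists2 W, U W & D `<=` W.
Proof.
move=> cU; have [w wP] := open_cover_selector cU.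
pose disj (D1 D2 : set X) := D1 <> D2 -> D1 `&` D2 = set0.
have disjxx D : disj D D by [].
have disjC D1 D2 : disj D1 D2 -> disj D2 D1 by move=> h /nesym /h; rewrite setIC.
have [A [pA dA Amax]] := Zorn_pairwise
  (fun D => open D /\ (D !=set0 -> exists2 W, U W & D `<=` W)) disjxx disjC.
exists A; split; last by move=> D /pA [_].
split; first by split; [move=> D /pA [] | exact: dA].
move=> A' [oA' dA'] AA'; apply/seteqP; split => // O A'O; apply: contrapT => AO.
have dO D : A D -> D `&` O = set0.
  by move=> AD; apply: dA' => //; [exact: AA' | move=> DO; apply: AO; rewrite -DO].
have [[x Ox]|O0] := pselect (O !=set0); last first.
  apply: AO; apply: Amax => [|D AD _]; last exact: dO.
  by split; [exact: oA' | move=> /O0].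
have AOw : A (O `&` w x).
  apply: Amax => [|D AD _]; last by rewrite setIA dO // set0I.
  split; first by apply: openI; [exact: oA' | case: cU => oU _; exact/oU/(wP x).1].
  by move=> _; exists (w x); [exact: (wP x).1 | move=> y []].
have : O `&` w x `&` O = set0.
  by apply: dA' => //; [exact: AA' | move=> e; apply: AO; rewrite -e].
by move/nonemptyPn; apply; exists x; split => //; split => //; exact: (wP x).2.
Qed.

End DisjointFamilies.

Lemma k_star_Lindelof_selectively_succ (X : topologicalType) k :
  k_star_Lindelof X k -> selectively_k_star_ccc X k.+1.
Proof.
move=> h U A cU mA; have [oU _] := cU.
have [V [VU [cV stV]]] := h U cU; have /countable_injP[f fi] := cV.
have pick n : exists a, A n a /\
    forall W, V W -> f W = n -> W !=set0 -> a `&` W !=set0.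
  have [[W0 [VW0 fW0]]|noW] := pselect (exists W0, V W0 /\ f W0 = n).
    have [a Aa aW0] := maximal_disjoint_open_family_meets (mA n) (oU _ (VU _ VW0)).
    exists a; split => // W VW fW.
    by have -> // : W = W0 by apply: fi; rewrite ?inE // fW fW0.
  have [a Aa _] := maximal_disjoint_open_family_meets (mA n) open0.
  by exists a; split => // W VW fW; case: noW; exists W.
have /choice[a aP] := pick; exists a; split; first by move=> n; exact: (aP n).1.
apply/seteqP; split => //; rewrite -stV stkSr; apply: stkS.
move=> x [W VW Wx]; have [y [ay Wy]] := (aP (f W)).2 W VW erefl (ex_intro _ x Wx).
by apply: sub_star1 Wx; [exact: VU | exists y; split => //; exists (f W)].
Qed.

Lemma selectively_omega_star_ccc_omega_star_Lindelof (X : topologicalType) :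
  selectively_omega_star_ccc X -> omega_star_Lindelof X.
Proof.
move=> h U cU; have [A [mA Aref]] := exists_maximal_disjoint_open_refinement cU.
have [k [k0 [a [aA sta]]]] := h U (fun _ => A) cU (fun _ => mA).
have aref D : range a D -> D !=set0 -> exists2 W, U W & D `<=` W.
  by move=> [n _ <-]; exact: Aref.
have [V [VU cV aV]] :=
  countable_refinement_subfamily (countable_image _ (countableP _)) aref.
exists k; split => //; exists V; split => //; split => //.
apply/seteqP; split => //; rewrite -sta; apply: stkS.
by move=> x [n _ anx]; apply: aV; exists (a n) => //; exists n.
Qed.

Lemma DCCC_star1_meets (X : topologicalType) (U : set (set X)) :
  open_cover U -> DCCC X -> exists O : set (set X), [/\ countable O,
    forall D, O D -> D !=set0 -> exists2 W, U W & D `<=` W &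
    forall N, open N -> N !=set0 -> (exists2 W, U W & N `<=` W) ->
      star1 U (\bigcup_(D in O) D) `&` N !=set0].
Proof.
move=> cU dccc; have [oU _] := cU; have [w wP] := open_cover_selector cU.
pose sep (D1 D2 : set X) :=
  forall W, U W -> W `&` D1 !=set0 -> W `&` D2 !=set0 -> D1 = D2.
have sepxx D : sep D D by [].
have sepC D1 D2 : sep D1 D2 -> sep D2 D1 by move=> h W UW m1 m2; exact/esym/(h W).
have [O [pO sepO Omax]] := Zorn_pairwise
  (fun D => [/\ open D, D !=set0 & exists2 W, U W & D `<=` W]) sepxx sepC.
exists O; split; last 2 first.
- by move=> D /pO [].
- move=> N oN N0 [W0 UW0 NW0]; apply: contrapT => Nfar.
  have ON : O N.
    apply: Omax => [|D OD W UW [y [Wy Dy]] [z [Wz Nz]]].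
      by split => //; exists W0.
    case: Nfar; exists z; split => //.
    by apply: sub_star1 Wz => //; exists y; split => //; exists D.
  case: Nfar; have [x Nx] := N0; exists x; split => //.
  by apply: sub_star1 (NW0 _ Nx) => //; exists x; split; [exact: NW0 | exists N].
apply: dccc => [D /pO [] // | x]; exists (w x); split.
  by apply: open_nbhs_nbhs; split; [exact/oU/(wP x).1 | exact: (wP x).2].
by move=> D1 D2 O1 O2; rewrite ![_ `&` w x]setIC; exact: sepO (wP x).1.
Qed.

Lemma DCCC_2_star_Lindelof (X : topologicalType) : DCCC X -> k_star_Lindelof X 2.
Proof.
move=> dccc U cU; have [oU _] := cU; have [w wP] := open_cover_selector cU.
have [O [cO Oref Omeets]] := DCCC_star1_meets cU dccc.
have [V [VU cV OV]] := countable_refinement_subfamily cO Oref.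
exists V; split => //; split => //; apply/seteqP; split => // x _.
apply: (stkS OV); have [y [sy wy]] : star1 U (\bigcup_(D in O) D) `&` w x !=set0.
  apply: Omeets; [exact/oU/(wP x).1 | exists x; exact: (wP x).2 |].
  by exists (w x); [exact: (wP x).1 |].
by exists (w x); [split; [exact: (wP x).1 | exists y] | exact: (wP x).2].
Qed.

Lemma DCCC_weakly_star_Lindelof (X : topologicalType) :
  DCCC X -> weakly_k_star_Lindelof X 1.
Proof.
move=> dccc U cU; have [oU _] := cU; have [w wP] := open_cover_selector cU.
have [O [cO Oref Omeets]] := DCCC_star1_meets cU dccc.
have [V [VU cV OV]] := countable_refinement_subfamily cO Oref.
exists V; split => //; split => //; apply/seteqP; split => // x _ B nB.
have [y [sy [By _]]] : star1 U (\bigcup_(D in O) D) `&` (B° `&` w x) !=set0.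
  apply: Omeets; first exact: openI (@open_interior _ B) (oU _ (wP x).1).
    by exists x; split; [exact: nbhs_singleton (nbhs_interior nB) | exact: (wP x).2].
  by exists (w x); [exact: (wP x).1 | move=> z []].
by exists y; split; [exact: star1S OV _ sy | exact: interior_subset].
Qed.

Definition shrinking_sequence (X : topologicalType) (W : set X) (G : nat -> set X) :=
  [/\ G 0%N = W, forall j, open (G j) & forall j, closure (G j.+1) `<=` G j].

Lemma regular_shrinking_sequence (X : topologicalType) (x : X) W :
  regular_space X -> open W -> W x ->
  exists G, shrinking_sequence W G /\ forall j, G j x.
Proof.
move=> hreg oW Wx; have /choice[sh shP] : forall V : set X,
    exists V', open V -> V x -> [/\ open V', V' x & closure V' `<=` V].
  move=> V; have [[oV Vx]|nV] := pselect (open V /\ V x); last first.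
    by exists set0 => oV Vx; case: nV.
  have [V0 nV0 cV0] := hreg x V (open_nbhs_nbhs (conj oV Vx)).
  exists V0° => _ _; split; first exact: open_interior.
    exact: nbhs_singleton (nbhs_interior nV0).
  by apply: subset_trans cV0; apply: closureS; exact: interior_subset.
have Gx j : open (iter j sh W) /\ iter j sh W x.
  by elim: j => [//|j [oj xj]]; have [] := shP _ oj xj.
exists (fun j => iter j sh W); split => [|j]; last exact: (Gx j).2.
split => // j; first exact: (Gx j).1.
by have [oj xj] := Gx j; have [] := shP _ oj xj.
Qed.

Section LayeredCover.
Variables (X : topologicalType) (F : set (set X)).
Variables (G : set X -> nat -> set X) (d : set X -> nat).
Hypothesis discF : discrete_family F.
Hypothesis shrinkG : forall D, F D -> shrinking_sequence D (G D).

Let G_open D j : F D -> open (G D j).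
Proof. by move=> /shrinkG []. Qed.

Let G_closure D j : F D -> closure (G D j.+1) `<=` G D j.
Proof. by move=> /shrinkG []. Qed.

Let G_nested D i j : F D -> (i <= j)%N -> G D j `<=` G D i.
Proof.
move=> FD /subnKC <-; elim: (j - i)%N => [|n IH]; first by rewrite addn0.
rewrite addnS; apply: subset_trans IH.
exact: subset_trans (@subset_closure _ _) (G_closure FD).
Qed.

Let G_sub D j : F D -> G D j `<=` D.
Proof. by move=> FD; have [G0 _ _] := shrinkG FD; rewrite -{2}G0; exact: G_nested. Qed.

Definition layered_cover : set (set X) :=
  [set ~` closure (\bigcup_(D in F) G D 1)]
  `|` [set W | exists D i, [/\ F D, (i < d D)%N & W = G D i `&` ~` closure (G D i.+2)]]
  `|` [set G D (d D) | D in F].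

Let closure_layers y :
  closure (\bigcup_(D in F) G D 1) y -> exists2 D, F D & G D 0 y.
Proof.
move=> cy; have [N [nN NP]] := discF y.
have [z [[D FD GDz] Nz]] := cy N nN.
exists D => //; apply: (G_closure (j := 0) FD) => B nB.
have [z' [[D' FD' GD'z'] [Nz' Bz']]] := cy _ (filterI nN nB).
suff <- : D' = D by exists z'.
by apply: NP => //; [exists z'; split => //; exact: G_sub GD'z' |
  exists z; split => //; exact: G_sub GDz].
Qed.

Lemma layered_cover_open_cover : open_cover layered_cover.
Proof.
split=> [W [[->|[D [i [FD _ ->]]]]|[D FD <-]]|].
- exact/closed_openC/closed_closure.
- by apply: openI; [exact: G_open | exact/closed_openC/closed_closure].
- exact: G_open.
apply/seteqP; split => // y _.
have [cy|ncy] := pselect (closure (\bigcup_(D in F) G D 1) y); last first.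
  by exists (~` closure (\bigcup_(D in F) G D 1)); [left; left|].
have [D FD GD0y] := closure_layers cy.
suff: forall m i, (i + m)%N = d D -> G D i y -> (\bigcup_(W in layered_cover) W) y.
  by move=> /(_ (d D) 0%N (add0n _)); apply.
elim=> [|m IH] i idm Gy.
  by exists (G D (d D)); [right; exists D | rewrite -idm addn0].
have [Gy1|nGy1] := pselect (G D i.+1 y).
  by apply: (IH i.+1) => //; rewrite addSnnS.
exists (G D i `&` ~` closure (G D i.+2)); last by split => // /(G_closure FD).
by left; right; exists D, i; split => //; rewrite -idm addnS ltnS leq_addr.
Qed.

Lemma layered_cover_star_avoids D (B : set X) : F D -> D `&` B = set0 ->
  forall j, (j <= d D)%N -> stk j B layered_cover `<=` ~` G D j.
Proof.
move=> FD DB; elim=> [_ z Bz /(G_sub FD) Dz|j IH jd z [W [UW [w [Ww sw]]] Wz] Gz].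
  by rewrite -[False]/(set0 z) -DB.
suff WG : W `<=` G D j by exact: IH (ltnW jd) w sw (WG w Ww).
have sameD D' n : F D' -> G D' n z -> D' = D.
  move=> FD' Gz'.
  exact: discrete_family_eq discF FD' FD (G_sub FD' Gz') (G_sub FD Gz).
case: UW => [[WO|[D' [i [FD' _ WR]]]]|[D' FD' WG]].
- rewrite WO in Wz; case: Wz; apply: subset_closure.
  by exists D => //; exact: (G_nested (i := 1) FD _ Gz).
- rewrite WR in Wz *; have DD' := sameD _ _ FD' Wz.1; subst D'.
  move=> y [Gy _]; apply: G_nested Gy => //.
  rewrite leqNgt; apply/negP => ij; apply: Wz.2; apply: subset_closure.
  by apply: (G_nested FD _ Gz); rewrite ltnS.
- rewrite -WG in Wz *; have DD' := sameD _ _ FD' Wz; subst D'.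
  exact: G_nested (ltnW jd).
Qed.

End LayeredCover.

Lemma weakly_strongly_omega_star_Lindelof_DCCC (X : topologicalType) :
  regular_space X -> weakly_strongly_omega_star_Lindelof X -> DCCC X.
Proof.
move=> hreg h F oF dF; apply: contrapT => nF.
pose F' := [set D | F D /\ D !=set0].
have nF' : ~ countable F'.
  move=> cF'; apply: nF; apply: sub_countable (countableU cF' (countable1 set0)).
  apply: subset_card_le => D FD.
  by have [D0|/nonemptyPn ->] := pselect (D !=set0); [left | right].
have dF' : discrete_family F'.
  move=> x; have [N [nN NP]] := dF x.
  by exists N; split => // D1 D2 [F1 _] [F2 _]; exact: NP.
have [d dP] := uncountable_unbounded_labelling nF'.
have /choice[G GP] : forall D, exists G,
    F' D -> exists x, shrinking_sequence D G /\ forall j, G j x.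
  move=> D; have [[FD [x Dx]]|nD] := pselect (F' D); last by exists (fun=> set0).
  have [G GP] := regular_shrinking_sequence hreg (oF D FD) Dx.
  by exists G => _; exists x.
have shrinkG D : F' D -> shrinking_sequence D (G D) by move=> /GP [x []].
pose U := layered_cover F' G d.
have [k [_ [B [cB stB]]]] := h U (layered_cover_open_cover d dF' shrinkG).
have [D [[FD' kD] DB]] : exists D, (F' D /\ (k <= d D)%N) /\ D `&` B = set0.
  apply: contrapT => noD; apply: (dP k).
  have F'disj D1 D2 y : F' D1 -> F' D2 -> D1 y -> D2 y -> D1 = D2.
    exact: discrete_family_eq dF'.
  apply: sub_countable (countable_members_meeting F'disj cB).
  apply: subset_card_le => D [FD' kD]; split => //.
  by apply: contrapT => /nonemptyPn DB; apply: noD; exists D.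
have [x [[_ oG _] Gx]] := GP D FD'.
have : closure (stk k B U) x by rewrite stB.
move=> /(_ (G D k) (open_nbhs_nbhs (conj (oG k) (Gx k)))).
by move=> [z [sz Gz]]; exact: (layered_cover_star_avoids dF' shrinkG FD' DB kD sz Gz).
Qed.

Theorem corollary7 (X : topologicalType) (hreg : @regular_space X) :
  [<-> DCCC X;
       selectively_k_star_ccc X 3;
       selectively_omega_star_ccc X;
       weakly_k_star_Lindelof X 1;
       weakly_omega_star_Lindelof X;
       weakly_strongly_k_star_Lindelof X 2;
       weakly_strongly_omega_star_Lindelof X;
       k_star_Lindelof X 2;
       omega_star_Lindelof X;
       strongly_k_star_Lindelof X 3;
       strongly_omega_star_Lindelof X].
Proof.
have wsDCCC := weakly_strongly_omega_star_Lindelof_DCCC hreg.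
have omega_DCCC : omega_star_Lindelof X -> DCCC X.
  by move/omega_star_Lindelof_weakly/weakly_omega_star_Lindelof_weakly_strongly.
tfae.
- by move/DCCC_2_star_Lindelof/k_star_Lindelof_selectively_succ.
- exact: selectively_k_star_ccc_omega.
- move/selectively_omega_star_ccc_omega_star_Lindelof/omega_DCCC.
  exact: DCCC_weakly_star_Lindelof.
- exact: weakly_k_star_Lindelof_omega.
- move/weakly_omega_star_Lindelof_weakly_strongly/wsDCCC.
  by move/DCCC_weakly_star_Lindelof/weakly_k_star_Lindelof_weakly_strongly_succ.
- exact: weakly_strongly_k_star_Lindelof_omega.
- by move/wsDCCC/DCCC_2_star_Lindelof.
- exact: k_star_Lindelof_omega.
- by move/omega_DCCC/DCCC_2_star_Lindelof/k_star_Lindelof_strongly_succ.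
- exact: strongly_k_star_Lindelof_omega.
- by move/strongly_omega_star_Lindelof_omega_star_Lindelof/omega_DCCC.
Qed.
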